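(* Let $G$ be a graph with at least two vertices and let $u$ be a universal vertex of $G$. Then $\tilde\gamma_{gr}^{\times 2}(G)=\tilde\gamma_{gr}^{\times 2}(G-u)+a(G-u)$ (where, since $G$ has no isolated vertices, $\tilde\gamma_{gr}^{\times 2}(G)=\gamma_{gr}^{\times 2}(G)$). Moreover, if $a(G-u)=0$, every GDDS of $G-u$ is a GDDS of $G$; and if $a(G-u)=1$ and $S$ is an MDNS of $G-u$, then $S\oplus(u)$ is an MDNS of $G$.
   Context: Graphs are finite, simple, undirected; $N[v]$ is the closed neighborhood; $u$ is universal if $N[u]=V(G)$. A sequence $S=(v_1,\dots,v_k)$ of distinct vertices of $G$ is a double neighborhood sequence (DNS) if for each $i$ some $u\in N[v_i]$ satisfies $|\{j<i: u\in N[v_j]\}|\le 1$. A maximum double neighborhood sequence (MDNS) is a DNS of maximum length, and $\tilde\gamma_{gr}^{\times 2}(G)$ denotes this length. A double dominating sequence (DDS) is a DNS whose vertex set $D$ satisfies $|N[w]\cap D|\ge 2$ for all $w$; for graphs without isolated vertices a Grundy double dominating sequence (GDDS) is a DDS of maximum length, of length $\gamma_{gr}^{\times 2}(G)$. $a(G)=1$ if $G$ has an isolated vertex and $a(G)=0$ otherwise. $S\oplus(u)$ denotes the sequence $S$ followed by $u$. *)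

(* A graph is given by a vertex set V : {set T} over a finType T
   and a symmetric irreflexive edge relation e : rel T (edges outside V are ignored). *)
From mathcomp Require Import all_boot.
Set Implicit Arguments. Unset Strict Implicit. Unset Printing Implicit Defensive.

Section Graphs.
Variable T : finType.
Implicit Types (V : {set T}) (e : rel T) (s : seq T).

Definition cnbhd V e (v : T) : {set T} := [set w in V | (w == v) || e v w].

Definition universal V e (u : T) : bool := (u \in V) && (cnbhd V e u == V).

Definition del_vertex V (u : T) : {set T} := V :\ u.

Definition has_isolated V e : bool := [exists v in V, cnbhd V e v == [set v]].
Definition a_param V e : nat := has_isolated V e.

Definition is_DNS V e s : bool :=
  [&& uniq s, all (mem V) s &
   [forall i : 'I_(size s),
      [exists w in cnbhd V e (tnth (in_tuple s) i),
         count (fun x => w \in cnbhd V e x) (take i s) <= 1]]].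

Definition is_DDS V e s : bool :=
  is_DNS V e s && [forall w in V, 2 <= #|cnbhd V e w :&: [set x in s]|].

Definition is_MDNS V e s : Prop :=
  is_DNS V e s /\ forall t, is_DNS V e t -> size t <= size s.
Definition is_GDDS V e s : Prop :=
  is_DDS V e s /\ forall t, is_DDS V e t -> size t <= size s.

(* lengths (every such sequence has length <= #|V| <= #|T|) *)
Definition tgamma_gr2 V e : nat :=
  \max_(n < #|T|.+1 | [exists t : n.-tuple T, is_DNS V e t]) n.
Definition gamma_gr2 V e : nat :=
  \max_(n < #|T|.+1 | [exists t : n.-tuple T, is_DDS V e t]) n.

End Graphs.

From mathcomp Require Import all_boot.
From mathcomp Require Import zify.
Set Implicit Arguments. Unset Strict Implicit. Unset Printing Implicit Defensive.

(* Every vertex lies in N[u], and the closed neighbourhoods of vertices other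
   than u are the same in G and G - u.  Hence a DNS of G - u is a DNS of G, and
   deleting u from a DNS of G leaves a DNS of G - u.  If u occurs in a DNS of G
   and w is footprinted by its last vertex, then, u being in N[w], at most one
   vertex of the shortened sequence lies in N[w] (when w = u the shortened
   sequence has at most one vertex altogether).  So if G - u has no isolated
   vertex, the shortened sequence can be prolonged inside G - u, and
   tgamma(G) = tgamma(G - u).  If G - u has an isolated vertex z, then
   N[z] = {z, u} in G, so u can be appended to any DNS of G - u, and
   tgamma(G) = tgamma(G - u) + 1.  Finally, in a graph without isolated
   vertices a DNS that cannot be prolonged is double dominating, so a longest
   DNS is a longest DDS. *)

Section Sequences.
Variable T : eqType.

Lemma forall_prefix_rcons (P : seq T -> T -> bool) s x :
  [forall i : 'I_(size (rcons s x)), P (take i (rcons s x)) (tnth (in_tuple (rcons s x)) i)]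
  = [forall i : 'I_(size s), P (take i s) (tnth (in_tuple s) i)] && P s x.
Proof.
have take_rcons i : i <= size s -> take i (rcons s x) = take i s.
  by move=> le_is; rewrite -cats1 takel_cat.
have lt_s_rcons : size s < size (rcons s x) by rewrite size_rcons.
apply/forallP/andP => [P_rcons | [/forallP P_s P_last] [i lt_i]].
  split; last first.
    have := P_rcons (Ordinal lt_s_rcons).
    by rewrite (tnth_nth x) /= nth_rcons ltnn eqxx take_rcons ?take_size.
  apply/forallP => i; have := P_rcons (widen_ord (ltnW lt_s_rcons) i).
  by rewrite !(tnth_nth x) /= nth_rcons ltn_ord take_rcons // ltnW.
rewrite (tnth_nth x) /= nth_rcons take_rcons; last by rewrite -ltnS -(size_rcons s x).
move: lt_i; rewrite size_rcons ltnS leq_eqVlt => /orP[/eqP -> | lt_is].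
  by rewrite ltnn eqxx take_size.
by rewrite lt_is; have := P_s (Ordinal lt_is); rewrite (tnth_nth x).
Qed.

Lemma size_filter_predC1 (u : T) s :
  uniq s -> size s = size (filter (predC1 u) s) + (u \in s).
Proof.
by move=> s_uniq; rewrite size_filter -(count_uniq_mem u s_uniq) addnC count_predC.
Qed.

End Sequences.

Section DoubleNeighbourhoodSequences.
Variables (T : finType) (e : rel T).
Hypothesis e_sym : symmetric e.
Implicit Types (W : {set T}) (s t : seq T).

Definition dns_appendable W p x :=
  [exists w in cnbhd W e x, count (fun y => w \in cnbhd W e y) p <= 1].

Lemma in_cnbhd W x y : (y \in cnbhd W e x) = (y \in W) && ((y == x) || e x y).
Proof. by rewrite inE. Qed.

Lemma cnbhd_id W x : x \in W -> x \in cnbhd W e x.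
Proof. by move=> xW; rewrite in_cnbhd xW eqxx. Qed.

Lemma mem_cnbhdC W x y : x \in W -> y \in W -> (y \in cnbhd W e x) = (x \in cnbhd W e y).
Proof. by move=> xW yW; rewrite !in_cnbhd xW yW eq_sym e_sym. Qed.

Lemma cnbhd_sub W x : cnbhd W e x \subset W.
Proof. by apply/subsetP => y; rewrite in_cnbhd => /andP[]. Qed.

Lemma cnbhdS W1 W2 x : W1 \subset W2 -> cnbhd W1 e x \subset cnbhd W2 e x.
Proof.
move=> /subsetP W12; apply/subsetP => y.
by rewrite !in_cnbhd => /andP[/W12 -> ->].
Qed.

Lemma is_DNS_nil W : is_DNS W e [::].
Proof. by apply/and3P; split => //; apply/forallP => -[]. Qed.

Lemma is_DNS_rcons W s x :
  is_DNS W e (rcons s x) =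
  [&& is_DNS W e s, x \notin s, x \in W & dns_appendable W s x].
Proof.
rewrite /is_DNS (forall_prefix_rcons (dns_appendable W)) rcons_uniq all_rcons.
have -> : mem W x = (x \in W) by [].
by case: (uniq s); case: (x \in s); case: (x \in W); case: (all (mem W) s); rewrite /= ?andbF.
Qed.

Lemma DNS_uniq W s : is_DNS W e s -> uniq s.
Proof. by case/and3P. Qed.

Lemma DNS_sub W s : is_DNS W e s -> all (mem W) s.
Proof. by case/and3P. Qed.

Lemma size_DNS W s : is_DNS W e s -> size s <= #|T|.
Proof. by move/DNS_uniq/card_uniqP <-; exact: max_card. Qed.

Lemma count_cnbhd W s w : uniq s -> all (mem W) s -> w \in W ->
  count (fun y => w \in cnbhd W e y) s = #|cnbhd W e w :&: [set x in s]|.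
Proof.
move=> s_uniq /allP sW wW.
rewrite -size_filter -(card_uniqP _) ?filter_uniq //; apply: eq_card => y.
rewrite mem_filter in_setI in_set; case ys: (y \in s); rewrite ?andbT ?andbF //.
by rewrite mem_cnbhdC //; apply: sW.
Qed.

Lemma has_isolatedPn W :
  reflect {in W, forall w, 1 < #|cnbhd W e w|} (~~ has_isolated W e).
Proof.
apply: (iffP exists_inPn) => [N1 w wW | N2 w wW].
  rewrite ltnNge; apply: contra (N1 w wW) => N_le1.
  by rewrite eq_sym eqEcard sub1set cnbhd_id // cards1.
by apply/eqP => Nw; have := N2 w wW; rewrite Nw cards1.
Qed.

Lemma DNS_rcons_cnbhd W s w : is_DNS W e s -> w \in W -> 1 < #|cnbhd W e w| ->
  #|cnbhd W e w :&: [set x in s]| <= 1 -> exists x, is_DNS W e (rcons s x).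
Proof.
move=> Ds wW N_gt1 Ns_le1.
have [x Nx xNs] : exists2 x, x \in cnbhd W e w & x \notin [set x in s].
  by apply/subsetPn; apply: contraTN Ns_le1 => /setIidPl ->; rewrite -ltnNge.
have xW : x \in W by move: Nx; rewrite in_cnbhd => /andP[].
exists x; move: xNs; rewrite is_DNS_rcons inE => -> /=; rewrite Ds xW /=.
apply/exists_inP; exists w; first by rewrite mem_cnbhdC.
by rewrite count_cnbhd // ?(DNS_uniq Ds) ?(DNS_sub Ds).
Qed.

Lemma DNS_rcons_or_DDS W s : ~~ has_isolated W e -> is_DNS W e s ->
  is_DDS W e s \/ exists x, is_DNS W e (rcons s x).
Proof.
move=> /has_isolatedPn N_gt1 Ds; rewrite /is_DDS Ds /=.
case: (boolP [forall _ in _, _]) => [|/forall_inPn[w wW Ns]]; [by left | right].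
by apply: DNS_rcons_cnbhd Ds wW (N_gt1 w wW) _; rewrite leqNgt.
Qed.

Lemma DNS_to_DDS W s : ~~ has_isolated W e -> is_DNS W e s ->
  exists2 t, is_DDS W e t & size s <= size t.
Proof.
move=> noiso; have [n] := ubnP (#|T| - size s); elim: n s => // n IH s lt_n Ds.
case: (DNS_rcons_or_DDS noiso Ds) => [DDSs | [x Dsx]]; first by exists s.
have [|t DDSt] := IH (rcons s x) _ Dsx.
  by have := size_DNS Dsx; rewrite size_rcons; lia.
by rewrite size_rcons => /ltnW; exists t.
Qed.

Lemma exists_MDNS W : exists s, is_MDNS W e s.
Proof.
pose P n := [exists t : n.-tuple T, is_DNS W e t].
have P0 : exists n, P n by exists 0; apply/existsP; exists [tuple]; exact: is_DNS_nil.
have P_le n : P n -> n <= #|T| by case/existsP => t /size_DNS; rewrite size_tuple.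
case: (ex_maxnP P0 P_le) => n /existsP[t Dt] max_n.
exists t; split => // t' Dt'.
by rewrite size_tuple; apply: max_n; apply/existsP; exists (in_tuple t').
Qed.

Lemma bigmax_tuple_size (P : pred (seq T)) s : size s <= #|T| -> P s ->
  (forall t, P t -> size t <= size s) ->
  \max_(n < #|T|.+1 | [exists t : n.-tuple T, P t]) n = size s.
Proof.
move=> s_le Ps max_s; apply/eqP; rewrite eqn_leq; apply/andP; split.
  by apply/bigmax_leqP => n /existsP[t /max_s]; rewrite size_tuple.
rewrite -ltnS in s_le; apply: (@leq_bigmax_cond _ _ _ (Ordinal s_le)).
by apply/existsP; exists (in_tuple s).
Qed.

Lemma tgamma_gr2_MDNS W s : is_MDNS W e s -> tgamma_gr2 W e = size s.
Proof. by case=> Ds; apply: bigmax_tuple_size (size_DNS Ds) Ds. Qed.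

Lemma gamma_gr2_GDDS W s : is_GDDS W e s -> gamma_gr2 W e = size s.
Proof. by case=> DDSs; apply: bigmax_tuple_size (size_DNS (andP DDSs).1) DDSs. Qed.

Lemma tgamma_gr2_no_isolated W : ~~ has_isolated W e -> tgamma_gr2 W e = gamma_gr2 W e.
Proof.
move=> noiso; have [s [Ds max_s]] := exists_MDNS W.
have [t DDSt le_st] := DNS_to_DDS noiso Ds.
have eq_ts : size t = size s by apply/eqP; rewrite eqn_leq le_st max_s ?(andP DDSt).1.
rewrite (tgamma_gr2_MDNS (conj Ds max_s)) (@gamma_gr2_GDDS _ t) //.
by split=> // t' /andP[Dt' _]; rewrite eq_ts max_s.
Qed.

End DoubleNeighbourhoodSequences.

Section UniversalVertex.
Variables (T : finType) (V : {set T}) (e : rel T) (u : T).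
Hypotheses (e_sym : symmetric e) (u_universal : universal V e u).
Implicit Types (s t : seq T).
Local Notation V' := (del_vertex V u).

Lemma in_del_vertex x : (x \in V') = (x != u) && (x \in V).
Proof. exact: in_setD1. Qed.

Lemma universal_mem : u \in V.
Proof. by case/andP: u_universal. Qed.

Lemma cnbhd_universal : cnbhd V e u = V.
Proof. by case/andP: u_universal => _ /eqP. Qed.

Lemma universal_in_cnbhd x : x \in V -> u \in cnbhd V e x.
Proof. by move=> xV; rewrite mem_cnbhdC ?universal_mem // cnbhd_universal. Qed.

Lemma cnbhd_del_vertex w x : w != u -> (w \in cnbhd V' e x) = (w \in cnbhd V e x).
Proof. by move=> wu; rewrite !in_cnbhd in_del_vertex wu. Qed.

Lemma count_cnbhd_universal s :
  all (mem V) s -> count (fun y => u \in cnbhd V e y) s = size s.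
Proof.
move=> /allP sV; rewrite -count_predT; apply: eq_in_count => y /sV.
exact: universal_in_cnbhd.
Qed.

Lemma universal_no_isolated v : v \in V' -> ~~ has_isolated V e.
Proof.
rewrite in_del_vertex => /andP[vu vV]; apply/has_isolatedPn => w wV.
apply/card_gt1P; have [-> | wu] := eqVneq w u.
  by exists u, v; rewrite cnbhd_universal universal_mem vV eq_sym.
by exists w, u; rewrite cnbhd_id ?universal_in_cnbhd.
Qed.

Lemma DNS_of_del_vertex s : is_DNS V' e s -> is_DNS V e s.
Proof.
elim/last_ind: s => [|s x IH]; first by rewrite !is_DNS_nil.
rewrite !is_DNS_rcons in_del_vertex => /and4P[Ds -> /andP[_ ->] /exists_inP[w Nw cnt]].
have wu : w != u by move: Nw; rewrite in_cnbhd in_del_vertex => /andP[/andP[]].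
rewrite IH //=; apply/exists_inP; exists w; first by rewrite -cnbhd_del_vertex.
by rewrite -(eq_count (fun y => cnbhd_del_vertex y wu)).
Qed.

Lemma DNS_filter_universal s : is_DNS V e s -> is_DNS V' e (filter (predC1 u) s).
Proof.
elim/last_ind: s => [|s x IH]; first by rewrite !is_DNS_nil.
rewrite is_DNS_rcons filter_rcons => /and4P[Ds xs xV /exists_inP[w Nw cnt]].
have [-> | xu] := eqVneq x u; first by rewrite /= eqxx; exact: IH.
rewrite /= xu is_DNS_rcons IH // mem_filter negb_and xs orbT in_del_vertex xu xV /=.
have [wu | wu] := eqVneq w u.
  apply/exists_inP; exists x; first by rewrite cnbhd_id // in_del_vertex xu.
  have size_s : size s <= 1 by rewrite -(count_cnbhd_universal (DNS_sub Ds)) -wu.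
  apply: leq_trans (count_size _ _) _; rewrite size_filter.
  exact: leq_trans (count_size _ _) size_s.
apply/exists_inP; exists w; first by rewrite cnbhd_del_vertex.
rewrite (eq_count (fun y => cnbhd_del_vertex y wu)) count_filter.
by apply: leq_trans cnt; apply: sub_count => y /andP[].
Qed.

Lemma DNS_filter_universal_sparse s v : is_DNS V e s -> u \in s -> v \in V' ->
  exists2 w, w \in V' & #|cnbhd V' e w :&: [set x in filter (predC1 u) s]| <= 1.
Proof.
case/lastP: s => [|s z] // Dsz u_sz vV'.
have := Dsz; rewrite is_DNS_rcons => /and4P[_ _ _ /exists_inP[w Nz cnt]].
have Ds' := DNS_filter_universal Dsz.
set s' := filter (predC1 u) (rcons s z) in Ds' *.
have wV : w \in V by move: Nz; rewrite in_cnbhd => /andP[].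
pose a y := w \in cnbhd V e y.
(* u lies in every closed neighbourhood, so removing it lowers the count by one *)
have cnt_s' : count a s' <= 1.
  have /permP/(_ a) := perm_to_rem u_sz; rewrite rem_filter ?(DNS_uniq Dsz) //= -/s'.
  have au : a u by rewrite /a cnbhd_universal.
  move: cnt (leq_b1 (a z)); rewrite -/a au -cats1 count_cat /= addn0; lia.
have [wu | wu] := eqVneq w u.
  have s'V : all (mem V) s'.
    by apply/allP => y; rewrite mem_filter => /andP[_ /(allP (DNS_sub Dsz))].
  have s'_le1 : size s' <= 1 by rewrite -(count_cnbhd_universal s'V) -wu.
  exists v => //; apply: leq_trans (subset_leq_card (subsetIr _ _)) _.
  by rewrite cardsE (leq_trans (card_size _) s'_le1).
have wV' : w \in V' by rewrite in_del_vertex wu.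
exists w; rewrite // -count_cnbhd ?(DNS_uniq Ds') ?(DNS_sub Ds') //.
by rewrite (eq_count (fun y => cnbhd_del_vertex y wu)).
Qed.

Lemma DNS_del_vertex_ge v t : ~~ has_isolated V' e -> v \in V' -> is_DNS V e t ->
  exists2 t', is_DNS V' e t' & size t <= size t'.
Proof.
move=> /has_isolatedPn N_gt1 vV' Dt; have Dt' := DNS_filter_universal Dt.
rewrite (size_filter_predC1 u (DNS_uniq Dt)).
have [u_t | _] := boolP (u \in t); last by rewrite addn0; exists (filter (predC1 u) t).
have [w wV' Nw_le1] := DNS_filter_universal_sparse Dt u_t vV'.
have [x Dx] := DNS_rcons_cnbhd e_sym Dt' wV' (N_gt1 w wV') Nw_le1.
by exists (rcons (filter (predC1 u) t) x); rewrite // size_rcons addn1.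
Qed.

Lemma MDNS_of_del_vertex v s : ~~ has_isolated V' e -> v \in V' ->
  is_MDNS V' e s -> is_MDNS V e s.
Proof.
move=> noiso vV' [Ds max_s]; split=> [|t]; first exact: DNS_of_del_vertex.
move=> /(DNS_del_vertex_ge noiso vV')[t' /max_s le_t's le_tt'].
exact: leq_trans le_tt' le_t's.
Qed.

Lemma DDS_of_del_vertex v s : v \in V' -> is_DDS V' e s -> is_DDS V e s.
Proof.
move=> vV' /andP[Ds dom]; rewrite /is_DDS DNS_of_del_vertex //=.
have V'V : V' \subset V := subD1set V u.
apply/forall_inP => w wV; have [-> | wu] := eqVneq w u.
  apply: leq_trans (forall_inP dom v vV') _; apply/subset_leq_card/setSI.
  by rewrite cnbhd_universal (subset_trans _ V'V) ?cnbhd_sub.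
have wV' : w \in V' by rewrite in_del_vertex wu.
apply: leq_trans (forall_inP dom w wV') _.
exact/subset_leq_card/setSI/cnbhdS.
Qed.

Lemma GDDS_of_del_vertex v s : ~~ has_isolated V' e -> v \in V' ->
  is_GDDS V' e s -> is_GDDS V e s.
Proof.
move=> noiso vV' [DDSs max_s]; split=> [|t /andP[Dt _]].
  exact: DDS_of_del_vertex vV' DDSs.
have [t' Dt' le_tt'] := DNS_del_vertex_ge noiso vV' Dt.
have [t'' DDSt'' le_t't''] := DNS_to_DDS e_sym noiso Dt'.
exact: leq_trans le_tt' (leq_trans le_t't'' (max_s _ DDSt'')).
Qed.

Lemma MDNS_rcons_universal s : has_isolated V' e -> is_MDNS V' e s ->
  is_MDNS V e (rcons s u).
Proof.
case/exists_inP => z zV' /eqP Nz [Ds max_s]; split=> [|t Dt].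
  have u_s : u \notin s.
    by apply/negP => /(allP (DNS_sub Ds)); rewrite /= in_del_vertex eqxx.
  have /andP[zu zV] : (z != u) && (z \in V) by rewrite -in_del_vertex.
  rewrite is_DNS_rcons DNS_of_del_vertex // u_s universal_mem /=.
  apply/exists_inP; exists z; first by rewrite cnbhd_universal.
  rewrite -(eq_count (fun y => cnbhd_del_vertex y zu)).
  rewrite (@eq_in_count _ _ (pred1 z)) ?count_uniq_mem ?(DNS_uniq Ds) ?leq_b1 //.
  by move=> y /(allP (DNS_sub Ds)) yV'; rewrite /= mem_cnbhdC // Nz in_set1.
rewrite size_rcons (size_filter_predC1 u (DNS_uniq Dt)) -addn1 leq_add ?leq_b1 //.
exact/max_s/DNS_filter_universal.
Qed.

End UniversalVertex.

Theorem proposition4 (T : finType) (V : {set T}) (e : rel T)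
  (e_sym : symmetric e) (e_irr : irreflexive e)
  (hV : 2 <= #|V|) (u : T) (hu : universal V e u) :
  [/\ tgamma_gr2 V e = tgamma_gr2 (del_vertex V u) e + a_param (del_vertex V u) e,
      tgamma_gr2 V e = gamma_gr2 V e,
      (a_param (del_vertex V u) e = 0 ->
         forall s, is_GDDS (del_vertex V u) e s -> is_GDDS V e s) &
      (a_param (del_vertex V u) e = 1 ->
         forall s, is_MDNS (del_vertex V u) e s -> is_MDNS V e (rcons s u))].
Proof.
have [v vV'] : exists v, v \in del_vertex V u.
  by apply/card_gt0P; move: hV; rewrite (cardsD1 u) (universal_mem hu).
have [S MDNS_S] := exists_MDNS e (del_vertex V u).
have tgamma_gamma := tgamma_gr2_no_isolated e_sym (universal_no_isolated e_sym hu vV').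
rewrite /a_param (tgamma_gr2_MDNS MDNS_S).
have [iso | noiso] := boolP (has_isolated (del_vertex V u) e).
  have MDNS_Su := MDNS_rcons_universal e_sym hu iso MDNS_S.
  split=> // [|_ s]; first by rewrite (tgamma_gr2_MDNS MDNS_Su) size_rcons addn1.
  exact: (MDNS_rcons_universal e_sym hu iso).
have MDNS_SG := MDNS_of_del_vertex e_sym hu noiso vV' MDNS_S.
split=> // [|_ s]; first by rewrite (tgamma_gr2_MDNS MDNS_SG) addn0.
exact: (GDDS_of_del_vertex e_sym hu noiso vV').
Qed.
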